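(* For every very-WSTS $\mathcal{S}$, the system $\mathcal{S}_\bot$ is a very-WSTS. Moreover, if $\mathcal{S}$ is positive, then $\mathcal{S}_\bot$ is positive.
   Context: A (labeled, ordered) transition system is $\mathcal{S}=(X,\xrightarrow{\Sigma},\le)$: $X$ a set, $\Sigma$ a finite alphabet, $\xrightarrow{a}\subseteq X\times X$, $\le$ a quasi-ordering; relations extend to words. $\mathrm{Post}(x,w)=\{y:x\xrightarrow{w}y\}$, extended to sets by union; $\downarrow D=\{x:\exists y\in D,\,x\le y\}$. WSTS: $\le$ a wqo and $x\xrightarrow{a}y$, $x'\ge x$ imply $x'\xrightarrow{w}y'\ge y$ for some $w$. Strong monotonicity: $x\xrightarrow{a}y$, $x'\ge x$ imply $x'\xrightarrow{a}y'$ with $y'\ge y$; strong-strict: additionally $x'>x$ gives $y'>y$. Deterministic: at most one $a$-successor. Ideals: nonempty downward-closed directed subsets, set $\mathrm{Idl}(X)$. Completion $\widehat{\mathcal{S}}=(\mathrm{Idl}(X),\Rightarrow_\Sigma,\subseteq)$ with $I\xRightarrow{a}J$ iff $J$ is a $\subseteq$-maximal ideal included in $\downarrow\mathrm{Post}(I,a)$. Levels: $\mathrm{Idl}_0(X)=\mathrm{Idl}(X)$, $\mathrm{Idl}_n(X)$ = unions of strictly increasing sequences in $\mathrm{Idl}_{n-1}(X)$; finitely many levels if some $\mathrm{Idl}_n(X)=\emptyset$. Very-WSTS: WSTS with strong monotonicity whose completion is a deterministic WSTS ($\subseteq$ a wqo on ideals, monotone) with strong-strict monotonicity, and $\mathrm{Idl}(X)$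 has finitely many levels. Positivity: $w$ is positive for $x$ if $x\xrightarrow{w}z$ for some $z\ge x$; $w$ is positive if positive for every $x$ with $\mathrm{Post}(x,w)\ne\emptyset$; a system is positive if every word positive for some state is positive. $\mathcal{S}_\bot=(X\cup\{\bot\},\xrightarrow{\Sigma},\le_\bot)$, where $\bot\notin X$ is a new state with no transitions (transition relations unchanged) and $\le_\bot=\le\cup\{(\bot,y):y\in X\cup\{\bot\}\}$. *)

From Stdlib Require Import List.
Import ListNotations.
Set Implicit Arguments.

Record TS : Type := mkTS {
  st : Type;
  lab : Type;
  trans : lab -> st -> st -> Prop;   (* x -a-> y  is  trans a x y *)
  ord : st -> st -> Prop
}.

Section Defs.
Variable T0 : TS.
Notation X := (st T0).
Notation le := (ord T0).

Definition finite_type (T : Type) : Prop := exists l : list T, forall a, In a l.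

Definition quasi_order {T : Type} (R : T -> T -> Prop) : Prop :=
  (forall x, R x x) /\ (forall x y z, R x y -> R y z -> R x z).

Definition wqo {T : Type} (R : T -> T -> Prop) : Prop :=
  quasi_order R /\ forall f : nat -> T, exists i j, i < j /\ R (f i) (f j).

Definition is_TS : Prop := finite_type (lab T0) /\ quasi_order le.

Definition lt (x y : X) : Prop := le x y /\ ~ le y x.

Inductive steps : list (lab T0) -> X -> X -> Prop :=
| steps_nil : forall x, steps [] x x
| steps_cons : forall a w x y z, trans T0 a x y -> steps w y z -> steps (a :: w) x z.

Definition WSTS : Prop :=
  is_TS /\ wqo le /\
  forall a x y x', trans T0 a x y -> le x x' ->
    exists w y', steps w x' y' /\ le y y'.

Definition strong_monotone : Prop :=
  forall a x y x', trans T0 a x y -> le x x' ->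
    exists y', trans T0 a x' y' /\ le y y'.

Definition strong_strict_monotone : Prop :=
  forall a x y x', trans T0 a x y -> le x x' ->
    exists y', trans T0 a x' y' /\ le y y' /\ (lt x x' -> lt y y').

Definition deterministic : Prop :=
  forall a x y y', trans T0 a x y -> trans T0 a x y' -> y = y'.

Definition Post (D : X -> Prop) (a : lab T0) : X -> Prop :=
  fun y => exists x, D x /\ trans T0 a x y.

Definition down (D : X -> Prop) : X -> Prop := fun x => exists y, D y /\ le x y.

Definition incl (A B : X -> Prop) : Prop := forall x, A x -> B x.

Definition is_ideal (I : X -> Prop) : Prop :=
  (exists x, I x) /\
  (forall x y, le x y -> I y -> I x) /\
  (forall x y, I x -> I y -> exists z, I z /\ le x z /\ le y z).

Definition Idl : Type := { I : X -> Prop | is_ideal I }.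

Definition Itrans (a : lab T0) (I J : Idl) : Prop :=
  incl (proj1_sig J) (down (Post (proj1_sig I) a)) /\
  forall K : Idl, incl (proj1_sig J) (proj1_sig K) ->
    incl (proj1_sig K) (down (Post (proj1_sig I) a)) ->
    incl (proj1_sig K) (proj1_sig J).

Definition Iincl (I J : Idl) : Prop := incl (proj1_sig I) (proj1_sig J).

Fixpoint level (n : nat) : (X -> Prop) -> Prop :=
  match n with
  | O => is_ideal
  | S m => fun I => exists f : nat -> (X -> Prop),
      (forall k, level m (f k)) /\
      (forall k, incl (f k) (f (Datatypes.S k)) /\ ~ incl (f (Datatypes.S k)) (f k)) /\
      (forall x, I x <-> exists k, f k x)
  end.

Definition finitely_many_levels : Prop :=
  exists n, forall I, ~ level n I.

Definition positive_for (w : list (lab T0)) (x : X) : Prop :=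
  exists z, steps w x z /\ le x z.

Definition positive_word (w : list (lab T0)) : Prop :=
  forall x, (exists y, steps w x y) -> positive_for w x.

Definition positive : Prop :=
  forall w, (exists x, positive_for w x) -> positive_word w.

End Defs.

Definition completion (S : TS) : TS :=
  @mkTS (Idl S) (lab S) (@Itrans S) (@Iincl S).

Definition very_WSTS (S : TS) : Prop :=
  WSTS S /\ strong_monotone S /\
  deterministic (completion S) /\ WSTS (completion S) /\
  strong_strict_monotone (completion S) /\
  finitely_many_levels S.

(** S_bot: new state bot (= None) with no transitions, below everything *)
Definition trans_bot (S : TS) (a : lab S) (x y : option (st S)) : Prop :=
  match x, y with
  | Some x, Some y => trans S a x y
  | _, _ => False
  end.

Definition ord_bot (S : TS) (x y : option (st S)) : Prop :=
  match x, y with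
  | None, _ => True
  | Some _, None => False
  | Some x, Some y => ord S x y
  end.

Definition S_bot (S : TS) : TS :=
  @mkTS (option (st S)) (lab S) (@trans_bot S) (@ord_bot S).

From Stdlib Require Import Classical ClassicalEpsilon
  FunctionalExtensionality PropExtensionality ProofIrrelevance.
Import Stdlib.Lists.List.ListNotations.
Local Open Scope list_scope.
Set Implicit Arguments.

(* The ideals of X_bot are {bot}, which lies below every ideal and has no
   successor in the completion, and the sets {bot} u I for I an ideal of X.
   The map I |-> {bot} u I is an order embedding that commutes with the
   transitions of the completions, so the wqo property (adding a bottom),
   determinism and strong-strict monotonicity carry over, and the level
   hierarchy grows by at most one, because only the first ideal of a strictly
   increasing sequence can be {bot}.  Positivity carries over because bot only
   has the empty run. *)

Section General.
Variable T : TS.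

Lemma Idl_eq (I J : Idl T) : (forall x, proj1_sig I x <-> proj1_sig J x) -> I = J.
Proof.
  destruct I as [I HI], J as [J HJ]; simpl; intro HIJ.
  assert (I = J) as <-.
  { apply functional_extensionality; intro x; apply propositional_extensionality; auto. }
  f_equal; apply proof_irrelevance.
Qed.

Lemma Iincl_quasi_order : quasi_order (@Iincl T).
Proof. split; [intros I x Hx; exact Hx | intros I J K HIJ HJK x Hx; auto]. Qed.

Lemma ideal_down_single (y : st T) :
  quasi_order (ord T) -> is_ideal T (fun x => ord T x y).
Proof.
  intros [Hrefl Htrans]; split; [|split].
  - exists y; apply Hrefl.
  - intros x z Hxz Hzy; eauto.
  - intros x z Hx Hz; exists y; auto.
Qed.

Lemma strong_strict_monotone_strong : strong_strict_monotone T -> strong_monotone T.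
Proof.
  intros Hssm a x y x' Hxy Hxx'.
  destruct (Hssm a x y x' Hxy Hxx') as [y' [Hx'y' [Hyy' _]]]; eauto.
Qed.

Lemma WSTS_of_strong_monotone :
  is_TS T -> wqo (ord T) -> strong_monotone T -> WSTS T.
Proof.
  intros HTS Hwqo Hsm; split; [exact HTS | split; [exact Hwqo |]].
  intros a x y x' Hxy Hxx'.
  destruct (Hsm a x y x' Hxy Hxx') as [y' [Hx'y' Hyy']].
  exists [a], y'; split; [econstructor; [exact Hx'y' | constructor] | exact Hyy'].
Qed.

Lemma positive_for_nil (x : st T) : quasi_order (ord T) -> positive_for T [] x.
Proof. intros [Hrefl _]; exists x; split; [constructor | apply Hrefl]. Qed.

End General.

Lemma wqo_extend_bottom (A B : Type) (R : A -> A -> Prop) (R' : B -> B -> Prop)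
    (e : A -> B) (bot : B -> Prop) :
  wqo R -> quasi_order R' ->
  (forall x y, R x y -> R' (e x) (e y)) ->
  (forall u v, bot u -> R' u v) ->
  (forall u, bot u \/ exists x, u = e x) ->
  wqo R'.
Proof.
  intros [_ Hgood] HR' He Hbot Hcover; split; [exact HR' |]; intro f.
  destruct (classic (exists i, bot (f i))) as [[i Hi] | Hnone].
  - exists i, (S i); auto.
  - assert (Hpre : forall i, exists x, f i = e x).
    { intro i; destruct (Hcover (f i)) as [Hi | Hi]; [exfalso; eauto | exact Hi]. }
    destruct (choice _ Hpre) as [g Hg].
    destruct (Hgood g) as [i [j [Hij Hgij]]].
    exists i, j; rewrite !Hg; auto.
Qed.

Section Bottom.
Variable T : TS.
Notation X := (st T).
Notation Xb := (st (S_bot T)).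

Definition restr (P : Xb -> Prop) : X -> Prop := fun x => P (Some x).

Definition liftp (K : X -> Prop) : Xb -> Prop :=
  fun o => match o with None => True | Some x => K x end.

Definition nonbot (P : Xb -> Prop) : Prop := exists x, P (Some x).

Hypothesis Hq : quasi_order (ord T).

Lemma ord_bot_quasi_order : quasi_order (@ord_bot T).
Proof.
  destruct Hq as [Hrefl Htrans]; split.
  - intros [x|]; simpl; auto.
  - intros [x|] [y|] [z|]; simpl; eauto; contradiction.
Qed.

Lemma ord_bot_wqo : wqo (ord T) -> wqo (@ord_bot T).
Proof.
  intros Hwqo.
  apply (wqo_extend_bottom Some (fun o => o = None) Hwqo).
  - exact ord_bot_quasi_order.
  - auto.
  - intros u v ->; exact I.
  - intros [x|]; eauto.
Qed.

Lemma strong_monotone_bot : strong_monotone T -> strong_monotone (S_bot T).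
Proof.
  intros Hsm a [x|] [y|] [x'|] Hxy Hxx'; simpl in *; try contradiction.
  destruct (Hsm a x y x' Hxy Hxx') as [y' [Hx'y' Hyy']].
  exists (Some y'); auto.
Qed.

Lemma WSTS_bot :
  finite_type (lab T) -> wqo (ord T) -> strong_monotone T -> WSTS (S_bot T).
Proof.
  intros Hfin Hwqo Hsm.
  apply WSTS_of_strong_monotone.
  - split; [exact Hfin | exact ord_bot_quasi_order].
  - exact (ord_bot_wqo Hwqo).
  - exact (strong_monotone_bot Hsm).
Qed.

Lemma steps_bot_None (w : list (lab T)) (y : Xb) : steps (S_bot T) w None y -> w = [].
Proof. inversion 1; [reflexivity | contradiction]. Qed.

Lemma steps_bot_Some (w : list (lab T)) (x : X) (y : Xb) :
  steps (S_bot T) w (Some x) y -> exists y', y = Some y' /\ steps T w x y'.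
Proof.
  revert x; induction w as [|a w IH]; intros x Hxy;
    inversion Hxy as [|? ? ? z ? Hxz Hzy]; subst.
  - exists x; split; [reflexivity | constructor].
  - destruct z as [z|]; [|contradiction].
    destruct (IH z Hzy) as [y' [-> Hzy']].
    exists y'; split; [reflexivity | econstructor; [exact Hxz | exact Hzy']].
Qed.

Lemma steps_Some (w : list (lab T)) (x y : X) : steps T w x y -> steps (S_bot T) w (Some x) (Some y).
Proof.
  induction 1 as [x|a w x y z Hxy _ IH];
    [exact (steps_nil (S_bot T) (Some x))
    | exact (@steps_cons (S_bot T) a w (Some x) (Some y) (Some z) Hxy IH)].
Qed.

Lemma positive_for_bot (w : list (lab T)) (x : X) : positive_for (S_bot T) w (Some x) <-> positive_for T w x.
Proof.
  split.
  - intros [z [Hxz Hle]].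
    destruct (steps_bot_Some Hxz) as [z' [-> Hxz']]; exists z'; auto.
  - intros [z [Hxz Hle]]; exists (Some z); split; [apply steps_Some|]; auto.
Qed.

Lemma positive_bot : positive T -> positive (S_bot T).
Proof.
  intros Hpos w [x0 Hx0] x [y Hxy].
  assert (Hnil : forall x, w = [] -> positive_for (S_bot T) w x).
  { intros ? ->; apply positive_for_nil, ord_bot_quasi_order. }
  destruct x as [x|]; [|exact (Hnil _ (steps_bot_None Hxy))].
  destruct x0 as [x0|]; [|destruct Hx0 as [z [Hz _]]; exact (Hnil _ (steps_bot_None Hz))].
  destruct (steps_bot_Some Hxy) as [y' [-> Hxy']].
  apply positive_for_bot, (Hpos w); [exists x0; apply positive_for_bot | exists y']; auto.
Qed.

Lemma ideal_bot_None (P : Xb -> Prop) : is_ideal (S_bot T) P -> P None.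
Proof. intros [[x Hx] [Hdown _]]; exact (Hdown None x I Hx). Qed.

Lemma ideal_restr (P : Xb -> Prop) : is_ideal (S_bot T) P -> nonbot P -> is_ideal T (restr P).
Proof.
  intros [_ [Hdown Hdir]] Hne; split; [exact Hne | split].
  - intros x y Hxy Hy; exact (Hdown (Some x) (Some y) Hxy Hy).
  - intros x y Hx Hy.
    destruct (Hdir _ _ Hx Hy) as [[z|] [Hz [Hxz Hyz]]]; [exists z; auto | contradiction].
Qed.

Lemma ideal_liftp (K : X -> Prop) : is_ideal T K -> is_ideal (S_bot T) (liftp K).
Proof.
  destruct Hq as [Hrefl _].
  intros [[x Hx] [Hdown Hdir]]; split; [exists (Some x); exact Hx | split].
  - intros [x'|] [y'|] Hxy Hy; simpl in *; eauto; contradiction.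
  - intros [x'|] [y'|] Hx' Hy'; simpl in *.
    + destruct (Hdir _ _ Hx' Hy') as [z [? [? ?]]]; exists (Some z); simpl; auto.
    + exists (Some x'); simpl; auto.
    + exists (Some y'); simpl; auto.
    + exists None; simpl; auto.
Qed.

Lemma incl_of_restr (P Q : Xb -> Prop) :
  Q None -> incl T (restr P) (restr Q) -> incl (S_bot T) P Q.
Proof. intros HQ HPQ [x|] Hx; [exact (HPQ x Hx) | exact HQ]. Qed.

Lemma nonbot_of_not_incl (P Q : Xb -> Prop) : Q None -> ~ incl (S_bot T) P Q -> nonbot P.
Proof.
  intros HQ HPQ; apply NNPP; intro Hbot; apply HPQ, incl_of_restr; [exact HQ |].
  intros x Hx; exfalso; apply Hbot; exists x; exact Hx.
Qed.

Definition restrI (P : Idl (S_bot T)) (HP : nonbot (proj1_sig P)) : Idl T :=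
  exist _ (restr (proj1_sig P)) (ideal_restr (proj2_sig P) HP).

Definition liftI (K : Idl T) : Idl (S_bot T) :=
  exist _ (liftp (proj1_sig K)) (ideal_liftp (proj2_sig K)).

Lemma liftI_nonbot (K : Idl T) : nonbot (proj1_sig (liftI K)).
Proof. exact (proj1 (proj2_sig K)). Qed.

Lemma liftI_restrI (P : Idl (S_bot T)) (HP : nonbot (proj1_sig P)) : liftI (restrI P HP) = P.
Proof.
  apply Idl_eq; intros [x|]; simpl; [reflexivity |].
  split; [intros _; exact (ideal_bot_None (proj2_sig P)) | trivial].
Qed.

Lemma Iincl_bot_wqo : wqo (@Iincl T) -> wqo (@Iincl (S_bot T)).
Proof.
  intros Hwqo.
  apply (wqo_extend_bottom liftI (fun P => ~ nonbot (proj1_sig P)) Hwqo).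
  - apply Iincl_quasi_order.
  - intros K K' HKK'; apply incl_of_restr; [exact I | exact HKK'].
  - intros P Q HP; apply incl_of_restr; [exact (ideal_bot_None (proj2_sig Q)) |].
    intros x Hx; exfalso; apply HP; exists x; exact Hx.
  - intro P; destruct (classic (nonbot (proj1_sig P))) as [HP | HP]; [right | left; exact HP].
    exists (restrI P HP); symmetry; apply liftI_restrI.
Qed.

Lemma down_Post_bot_Some (P : Xb -> Prop) (a : lab T) (y : X) :
  down (S_bot T) (Post (S_bot T) P a) (Some y) <-> down T (Post T (restr P) a) y.
Proof.
  split.
  - intros [[z|] [[[x|] [Hx Hxz]] Hyz]]; simpl in *; try contradiction.
    exists z; split; [exists x; split |]; assumption.
  - intros [z [[x [Hx Hxz]] Hyz]].
    exists (Some z); split; [exists (Some x); split |]; assumption.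
Qed.

Lemma incl_down_Post_bot (P Q : Xb -> Prop) (a : lab T) : nonbot Q ->
  incl (S_bot T) Q (down (S_bot T) (Post (S_bot T) P a))
  <-> incl T (restr Q) (down T (Post T (restr P) a)).
Proof.
  intros [q Hqin]; split.
  - intros HQ x Hx; apply down_Post_bot_Some, HQ, Hx.
  - intros HQ [x|] Hx; [apply down_Post_bot_Some, HQ, Hx |].
    destruct (proj2 (down_Post_bot_Some P a q) (HQ q Hqin)) as [z [Hz _]].
    exists z; split; [exact Hz | exact I].
Qed.

Lemma Itrans_bot_nonbot (a : lab T) (P J : Idl (S_bot T)) :
  @Itrans (S_bot T) a P J -> nonbot (proj1_sig P) /\ nonbot (proj1_sig J).
Proof.
  intros [HJP Hmax].
  destruct (proj1 (proj2_sig J)) as [j Hj].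
  destruct (HJP j Hj) as [[y|] [[[x|] [Hx Hxy]] _]]; simpl in Hxy; try contradiction.
  split; [exists x; exact Hx |].
  (* Otherwise J = {bot} would lie strictly inside the ideal generated by Some y. *)
  pose (Ky := exist _ _ (ideal_down_single (S_bot T) (Some y) ord_bot_quasi_order) : Idl (S_bot T)).
  apply NNPP; intro HJbot.
  assert (HKyJ : incl (S_bot T) (proj1_sig Ky) (proj1_sig J)).
  { apply Hmax.
    - apply incl_of_restr; [exact I |].
      intros z Hz; exfalso; apply HJbot; exists z; exact Hz.
    - intros o Ho; exists (Some y); split; [exists (Some x); split |]; assumption. }
  apply HJbot; exists y; apply HKyJ, (proj1 Hq).
Qed.

Lemma Itrans_bot_iff (a : lab T) (P J : Idl (S_bot T))
    (HP : nonbot (proj1_sig P)) (HJ : nonbot (proj1_sig J)) :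
  @Itrans (S_bot T) a P J <-> Itrans a (restrI P HP) (restrI J HJ).
Proof.
  split; intros [HJP Hmax]; split.
  - exact (proj1 (incl_down_Post_bot _ _ HJ) HJP).
  - intros K HJK HKP.
    assert (HKJ : incl (S_bot T) (liftp (proj1_sig K)) (proj1_sig J)).
    { apply (Hmax (liftI K)).
      - apply incl_of_restr; [exact I | exact HJK].
      - exact (proj2 (incl_down_Post_bot _ _ (liftI_nonbot K)) HKP). }
    intros x Hx; exact (HKJ (Some x) Hx).
  - exact (proj2 (incl_down_Post_bot _ _ HJ) HJP).
  - intros K HJK HKP.
    assert (HK : nonbot (proj1_sig K)).
    { destruct HJ as [j Hj]; exists j; exact (HJK _ Hj). }
    apply incl_of_restr; [exact (ideal_bot_None (proj2_sig J)) |].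
    apply (Hmax (restrI K HK)).
    + intros x Hx; exact (HJK _ Hx).
    + exact (proj1 (incl_down_Post_bot _ _ HK) HKP).
Qed.

Lemma Itrans_liftI (a : lab T) (P : Idl (S_bot T)) (HP : nonbot (proj1_sig P)) (K : Idl T) :
  Itrans a (restrI P HP) K -> @Itrans (S_bot T) a P (liftI K).
Proof. exact (proj2 (Itrans_bot_iff a P (liftI K) HP (liftI_nonbot K))). Qed.

Lemma deterministic_completion_bot :
  deterministic (completion T) -> deterministic (completion (S_bot T)).
Proof.
  intros Hdet a P J J' HJ HJ'.
  destruct (Itrans_bot_nonbot HJ) as [HP HJn], (Itrans_bot_nonbot HJ') as [_ HJn'].
  rewrite <- (liftI_restrI J HJn), <- (liftI_restrI J' HJn'); f_equal.
  apply (Hdet a (restrI P HP)); apply Itrans_bot_iff; assumption.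
Qed.

Lemma strong_strict_monotone_completion_bot :
  strong_strict_monotone (completion T) -> strong_strict_monotone (completion (S_bot T)).
Proof.
  intros Hssm a P J P' HPJ HPP'.
  destruct (Itrans_bot_nonbot HPJ) as [HP HJ].
  assert (HP' : nonbot (proj1_sig P')).
  { destruct HP as [x Hx]; exists x; exact (HPP' _ Hx). }
  destruct (Hssm a (restrI P HP) (restrI J HJ) (restrI P' HP')) as [K [HP'K [HJK Hlt]]].
  - exact (proj1 (Itrans_bot_iff a P J HP HJ) HPJ).
  - intros x Hx; exact (HPP' _ Hx).
  - assert (HJK' : Iincl J (liftI K)) by (apply incl_of_restr; [exact I | exact HJK]).
    exists (liftI K); split; [exact (Itrans_liftI HP'K) | split; [exact HJK' |]].
    intros [_ HP'P].
    assert (HltT : lt (completion T) (restrI P HP) (restrI P' HP')).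
    { split; [intros x Hx; exact (HPP' _ Hx) |].
      intro HP'Pr; apply HP'P, incl_of_restr; [exact (ideal_bot_None (proj2_sig P)) | exact HP'Pr]. }
    destruct (Hlt HltT) as [_ HKJ]; split; [exact HJK' |].
    intro HKJ'; apply HKJ; intros x Hx; exact (HKJ' (Some x) Hx).
Qed.

Lemma WSTS_completion_bot :
  finite_type (lab T) -> wqo (@Iincl T) -> strong_strict_monotone (completion T) ->
  WSTS (completion (S_bot T)).
Proof.
  intros Hfin Hwqo Hssm; apply WSTS_of_strong_monotone.
  - split; [exact Hfin | apply Iincl_quasi_order].
  - exact (Iincl_bot_wqo Hwqo).
  - apply strong_strict_monotone_strong, strong_strict_monotone_completion_bot, Hssm.
Qed.

Lemma level_bot_None {m : nat} {P : Xb -> Prop} : level (S_bot T) m P -> P None.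
Proof.
  revert P; induction m as [|m IH]; intros P HP.
  - exact (ideal_bot_None HP).
  - destruct HP as [f [Hf [_ Hunion]]]; apply Hunion; exists 0; exact (IH _ (Hf 0)).
Qed.

Lemma level_bot_restr {m : nat} {P : Xb -> Prop} : level (S_bot T) m P -> nonbot P -> level T m (restr P).
Proof.
  revert P; induction m as [|m IH]; intros P HP HPne.
  - exact (ideal_restr HP HPne).
  - destruct HP as [f [Hf [Hstrict Hunion]]].
    (* f 0 contains bot, so every later f k, being strictly larger, meets X. *)
    assert (Hne : forall k, nonbot (f (S k))).
    { intro k; exact (nonbot_of_not_incl (level_bot_None (Hf k)) (proj2 (Hstrict k))). }
    exists (fun k => restr (f (S k))); split; [|split].
    + intro k; exact (IH _ (Hf (S k)) (Hne k)).
    + intro k; destruct (Hstrict (S k)) as [Hincl Hnot]; split.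
      * intros x Hx; exact (Hincl _ Hx).
      * intro Hr; apply Hnot, incl_of_restr; [exact (level_bot_None (Hf (S k))) | exact Hr].
    + intro x; split.
      * intro Hx; destruct (proj1 (Hunion (Some x)) Hx) as [k Hk].
        exists k; exact (proj1 (Hstrict k) _ Hk).
      * intros [k Hk]; apply (proj2 (Hunion (Some x))); exists (S k); exact Hk.
Qed.

Lemma finitely_many_levels_bot : finitely_many_levels T -> finitely_many_levels (S_bot T).
Proof.
  intros [n Hn]; exists (S n); intros P [f [Hf [Hstrict _]]].
  apply (Hn (restr (f 1))), (level_bot_restr (Hf 1)).
  exact (nonbot_of_not_incl (level_bot_None (Hf 0)) (proj2 (Hstrict 0))).
Qed.

End Bottom.

Theorem proposition27 (S : TS) :
  very_WSTS S ->
  very_WSTS (S_bot S) /\ (positive S -> positive (S_bot S)).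
Proof.
  intros [[[Hfin Hq] [Hwqo _]] [Hsm [Hdet [[_ [HwqoI _]] [Hssm Hlev]]]]].
  split; [| exact (positive_bot Hq)].
  split; [exact (WSTS_bot Hq Hfin Hwqo Hsm) |].
  split; [exact (strong_monotone_bot Hsm) |].
  split; [exact (deterministic_completion_bot Hq Hdet) |].
  split; [exact (WSTS_completion_bot Hq Hfin HwqoI Hssm) |].
  split; [exact (strong_strict_monotone_completion_bot Hq Hssm) |].
  exact (finitely_many_levels_bot Hlev).
Qed.
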